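(* For any complex numbers $a,b,\alpha,\beta,\theta$ with $\beta a-\alpha b\neq0$ and any natural number $n\ge1$, \[ \sum_{r=0}^{\lfloor n/2\rfloor}\Psi\left(\begin{array}{cc|c} a & b & n \\ \alpha & \beta & r \end{array}\right)\theta^r=\Psi(a-\alpha\theta,b-\beta\theta,n),\qquad \sum_{r=0}^{\lfloor (n-1)/2\rfloor}\Phi\left(\begin{array}{cc|c} a & b & n \\ \alpha & \beta & r \end{array}\right)\theta^r=\Phi(a-\alpha\theta,b-\beta\theta,n). \]
   Context: $\delta(m)=1$ for $m$ odd, $0$ for $m$ even; $\lfloor\cdot\rfloor$ is the floor. $\Psi(a,b,n)$, $\Phi(a,b,n)$ are defined by $\Psi(a,b,0)=2$, $\Psi(a,b,1)=1$, $\Psi(a,b,n+1)=(2a-b)^{\delta(n)}\Psi(a,b,n)-a\Psi(a,b,n-1)$ and $\Phi(a,b,0)=0$, $\Phi(a,b,1)=1$, $\Phi(a,b,n+1)=(2a-b)^{\delta(n+1)}\Phi(a,b,n)-a\Phi(a,b,n-1)$. For $n\ge1$ and numbers with $\beta a-\alpha b\ne0$, $\Psi\left(\begin{array}{cc|c} a & b & n \\ \alpha & \beta & r \end{array}\right)$ ($0\le r\le\lfloor n/2\rfloor$) and $\Phi\left(\begin{array}{cc|c} a & b & n \\ \alpha & \beta & r \end{array}\right)$ ($0\le r\le\lfloor (n-1)/2\rfloor$) are the unique numbers such that, identically in $x,y$, $(\beta a-\alpha b)^{\lfloor n/2\rfloor}\frac{x^n+y^n}{(x+y)^{\delta(n)}}=\sum_{r}\Psi\left(\begin{array}{cc|c}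 a & b & n \\ \alpha & \beta & r \end{array}\right)(\alpha x^2+\beta xy+\alpha y^2)^{\lfloor n/2\rfloor-r}(ax^2+bxy+ay^2)^r$ and $(\beta a-\alpha b)^{\lfloor (n-1)/2\rfloor}\frac{x^n-y^n}{(x-y)(x+y)^{\delta(n-1)}}=\sum_{r}\Phi\left(\begin{array}{cc|c} a & b & n \\ \alpha & \beta & r \end{array}\right)(\alpha x^2+\beta xy+\alpha y^2)^{\lfloor (n-1)/2\rfloor-r}(ax^2+bxy+ay^2)^r$. *)

(* Complex numbers are modelled as  R[i]  (complex.v of
   mathcomp-real-closed) for an arbitrary  R : realType  (a model of the reals),
   i.e. R[i] is (a copy of) the field C of complex numbers. *)
From mathcomp Require Import all_boot all_algebra.
From mathcomp Require Export complex.
From mathcomp Require Export reals.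
Set Implicit Arguments. Unset Strict Implicit. Unset Printing Implicit Defensive.
Import GRing.Theory Num.Theory.
Local Open Scope ring_scope.

Section Seqs.
Variable F : fieldType.

Definition delta (m : nat) : nat := odd m.

(* psi_pair a b n = (Psi(a,b,n), Psi(a,b,n+1)) *)
Fixpoint psi_pair (a b : F) (n : nat) : F * F :=
  match n with
  | 0 => (2, 1)
  | m.+1 => let: (p, q) := psi_pair a b m in
            (q, (2 * a - b) ^+ delta m.+1 * q - a * p)
  end.
Definition Psi (a b : F) (n : nat) : F := (psi_pair a b n).1.

(* phi_pair a b n = (Phi(a,b,n), Phi(a,b,n+1)) *)
Fixpoint phi_pair (a b : F) (n : nat) : F * F :=
  match n with
  | 0 => (0, 1)
  | m.+1 => let: (p, q) := phi_pair a b m in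
            (q, (2 * a - b) ^+ delta m.+2 * q - a * p)
  end.
Definition Phi (a b : F) (n : nat) : F := (phi_pair a b n).1.

(* c : nat -> F are the coefficients Psi( a b | n ; alpha beta | r ),
   0 <= r <= floor(n/2): the defining identity, identically in x, y
   (wherever the left-hand side is defined, i.e. (x+y)^delta(n) <> 0). *)
Definition is_Psi_coefs (a b al be : F) (n : nat) (c : nat -> F) : Prop :=
  forall x y : F, (x + y) ^+ delta n != 0 ->
    (be * a - al * b) ^+ n./2 * ((x ^+ n + y ^+ n) / (x + y) ^+ delta n)
    = \sum_(r < n./2.+1)
        c r * (al * x ^+ 2 + be * x * y + al * y ^+ 2) ^+ (n./2 - r)
            * (a * x ^+ 2 + b * x * y + a * y ^+ 2) ^+ r.

(* the same for Phi( a b | n ; alpha beta | r ), 0 <= r <= floor((n-1)/2),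
   identity required wherever (x-y)(x+y)^delta(n-1) <> 0. *)
Definition is_Phi_coefs (a b al be : F) (n : nat) (c : nat -> F) : Prop :=
  forall x y : F, (x - y) * (x + y) ^+ delta n.-1 != 0 ->
    (be * a - al * b) ^+ (n.-1)./2
      * ((x ^+ n - y ^+ n) / ((x - y) * (x + y) ^+ delta n.-1))
    = \sum_(r < (n.-1)./2.+1)
        c r * (al * x ^+ 2 + be * x * y + al * y ^+ 2) ^+ ((n.-1)./2 - r)
            * (a * x ^+ 2 + b * x * y + a * y ^+ 2) ^+ r.
End Seqs.

(* For a = xy and b = 2xy - (x+y)^2 one has 2a - b = (x+y)^2, so the
   recurrences of Psi and Phi become those of x^n + y^n and of
   (x^n - y^n)/(x - y), divided by the appropriate power of x + y.
   Let D = be a - al b, Q1 = al x^2 + be xy + al y^2, Q2 = a x^2 + b xy + a y^2.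
   The point (u, v) = (Q1, Q2) / D satisfies u a - v al = xy and
   u b - v be = 2xy - (x+y)^2, and Psi(u a - v al, u b - v be, n) is a binary
   form of degree n/2 in (u, v).  Its coefficients c_r are therefore Psi
   coefficients, and at (u, v) = (1, th) it reads
   Psi(a - al th, b - be th, n) = sum_r c_r th^r.  They are the only ones: over an algebraically closed field of
   characteristic 0, (Q1, Q2) takes every value (D, t D) with t outside two
   points, so a form vanishing at (Q1, Q2) for all x, y vanishes at (1, t) for
   infinitely many t.  The same argument applies to Phi. *)

From mathcomp Require Import all_boot all_algebra.
From mathcomp Require Import complex reals.
From mathcomp Require Import ring.
Set Implicit Arguments.
Unset Strict Implicit.
Unset Printing Implicit Defensive.
Import GRing.Theory Num.Theory.
Local Open Scope ring_scope.

Lemma nat_ind2 (P : nat -> Prop) :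
  P 0%N -> P 1%N -> (forall n, P n -> P n.+1 -> P n.+2) -> forall n, P n.
Proof.
move=> P0 P1 PSS n; suff: P n /\ P n.+1 by case.
by elim: n => [|n [Pn PSn]]; split; last exact: PSS.
Qed.

Section BinaryForms.
Variable F : fieldType.
Implicit Types (c d : nat -> F) (k u v t : F) (f g : F -> F -> F).

Definition binary_form m c u v := \sum_(r < m.+1) c r * u ^+ (m - r) * v ^+ r.

Definition is_binary_form m f := exists c, forall u v, f u v = binary_form m c u v.

Lemma binary_form1l m c t : binary_form m c 1 t = \sum_(r < m.+1) c r * t ^+ r.
Proof. by apply: eq_bigr => r _; rewrite expr1n mulr1. Qed.

Lemma binary_formZ m c k u v :
  binary_form m c (k * u) (k * v) = k ^+ m * binary_form m c u v.
Proof.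
rewrite mulr_sumr; apply: eq_bigr => r _.
have r_le_m : (r <= m)%N by rewrite -ltnS.
have -> : k ^+ m = k ^+ (m - r) * k ^+ r by rewrite -exprD subnK.
by rewrite !exprMn; ring.
Qed.

Lemma binary_formB m c d u v :
  binary_form m c u v - binary_form m d u v = binary_form m (fun r => c r - d r) u v.
Proof. by rewrite -sumrB; apply: eq_bigr => r _; rewrite !mulrBl. Qed.

Lemma binary_form_mul_linear m c l0 l1 u v :
  (l0 * u + l1 * v) * binary_form m c u v =
  binary_form m.+1 (fun r => l0 * (if (r <= m)%N then c r else 0) +
                             l1 * (if r is r'.+1 then c r' else 0)) u v.
Proof.
rewrite /binary_form mulrDl !mulr_sumr.
under [RHS]eq_bigr => r _ do rewrite !mulrDl.
rewrite big_split /= [X in _ = X + _]big_ord_recr [X in _ = _ + X]big_ord_recl /=.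
rewrite ltnn !(mulr0, mul0r, addr0, add0r); congr (_ + _); apply: eq_bigr => r _.
- by rewrite -ltnS ltn_ord subSn -1?ltnS // exprS; ring.
- by rewrite /bump add1n subSS exprS; ring.
Qed.

Lemma eq_is_binary_form m f g : f =2 g -> is_binary_form m f -> is_binary_form m g.
Proof. by move=> fg [c fc]; exists c => u v; rewrite -fg. Qed.

Lemma is_binary_form_const k : is_binary_form 0 (fun _ _ => k).
Proof. by exists (fun _ => k) => u v; rewrite /binary_form big_ord1 !expr0 !mulr1. Qed.

Lemma is_binary_formB m f g :
  is_binary_form m f -> is_binary_form m g -> is_binary_form m (fun u v => f u v - g u v).
Proof. by move=> [c fc] [d gd]; eexists => u v; rewrite fc gd binary_formB. Qed.

Lemma is_binary_form_mul_linear m l0 l1 f :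
  is_binary_form m f -> is_binary_form m.+1 (fun u v => (l0 * u + l1 * v) * f u v).
Proof. by move=> [c fc]; eexists => u v; rewrite fc binary_form_mul_linear. Qed.

End BinaryForms.

Section Recurrences.
Variable F : fieldType.
Implicit Types (a b al be x y : F).

Lemma PsiSS a b n :
  Psi a b n.+2 = (2 * a - b) ^+ delta n.+1 * Psi a b n.+1 - a * Psi a b n.
Proof. by rewrite /Psi /=; case: (psi_pair a b n). Qed.

Lemma PhiSS a b n :
  Phi a b n.+2 = (2 * a - b) ^+ delta n.+2 * Phi a b n.+1 - a * Phi a b n.
Proof. by rewrite /Phi /=; case: (phi_pair a b n). Qed.

Lemma Psi_power_sum x y n :
  (x + y) ^+ odd n * Psi (x * y) (2 * (x * y) - (x + y) ^+ 2) n = x ^+ n + y ^+ n.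
Proof.
elim/nat_ind2: n => [||n IH0 IH1]; try by rewrite /Psi /=; ring.
have -> : x ^+ n.+2 + y ^+ n.+2
    = (x + y) * (x ^+ n.+1 + y ^+ n.+1) - x * y * (x ^+ n + y ^+ n).
  by rewrite !exprS; ring.
by rewrite PsiSS -IH0 -IH1 /delta /=; case: (odd n) => /=; ring.
Qed.

Lemma Phi_power_diff x y n :
  (x - y) * (x + y) ^+ odd n * Phi (x * y) (2 * (x * y) - (x + y) ^+ 2) n.+1
  = x ^+ n.+1 - y ^+ n.+1.
Proof.
elim/nat_ind2: n => [||n IH0 IH1]; try by rewrite /Phi /=; ring.
have -> : x ^+ n.+3 - y ^+ n.+3
    = (x + y) * (x ^+ n.+2 - y ^+ n.+2) - x * y * (x ^+ n.+1 - y ^+ n.+1).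
  by rewrite !exprS; ring.
by rewrite PhiSS -IH0 -IH1 /delta /=; case: (odd n) => /=; ring.
Qed.

Lemma Psi_binary_form a b al be n :
  is_binary_form n./2 (fun u v => Psi (u * a - v * al) (u * b - v * be) n).
Proof.
elim/nat_ind2: n => [||n IH0 IH1].
- by apply: eq_is_binary_form (is_binary_form_const 2) => u v.
- by apply: eq_is_binary_form (is_binary_form_const 1) => u v.
have A_lin u v : u * a - v * al = a * u + (- al) * v by ring.
have L_lin u v : 2 * (u * a - v * al) - (u * b - v * be)
                 = (2 * a - b) * u + (- (2 * al - be)) * v by ring.
move: IH1; rewrite /= uphalf_half; case odd_n: (odd n) => IH1.
- apply: eq_is_binary_form (is_binary_formB IH1 (is_binary_form_mul_linear _ _ IH0)).
  by move=> u v; rewrite [RHS]PsiSS /delta /= odd_n /= mul1r A_lin.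
- apply: eq_is_binary_form
    (is_binary_formB (is_binary_form_mul_linear _ _ IH1) (is_binary_form_mul_linear _ _ IH0)).
  by move=> u v; rewrite [RHS]PsiSS /delta /= odd_n expr1 L_lin A_lin.
Qed.

Lemma Phi_binary_form a b al be n :
  is_binary_form n./2 (fun u v => Phi (u * a - v * al) (u * b - v * be) n.+1).
Proof.
elim/nat_ind2: n => [||n IH0 IH1].
- by apply: eq_is_binary_form (is_binary_form_const 1) => u v.
- by apply: eq_is_binary_form (is_binary_form_const 1) => u v; rewrite /Phi /=; ring.
have A_lin u v : u * a - v * al = a * u + (- al) * v by ring.
have L_lin u v : 2 * (u * a - v * al) - (u * b - v * be)
                 = (2 * a - b) * u + (- (2 * al - be)) * v by ring.
move: IH1; rewrite /= uphalf_half; case odd_n: (odd n) => IH1.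
- apply: eq_is_binary_form (is_binary_formB IH1 (is_binary_form_mul_linear _ _ IH0)).
  by move=> u v; rewrite [RHS]PhiSS /delta /= odd_n /= mul1r A_lin.
- apply: eq_is_binary_form
    (is_binary_formB (is_binary_form_mul_linear _ _ IH1) (is_binary_form_mul_linear _ _ IH0)).
  by move=> u v; rewrite [RHS]PhiSS /delta /= odd_n expr1 L_lin A_lin.
Qed.

End Recurrences.

Section Quadratics.
Variable F : fieldType.
Implicit Types (p q x y : F).

Definition sym_quad p q x y := p * x ^+ 2 + q * x * y + p * y ^+ 2.

Lemma sym_quadE p q x y : sym_quad p q x y = p * (x ^+ 2 + y ^+ 2) + q * (x * y).
Proof. by rewrite /sym_quad; ring. Qed.

Variables a b al be : F.
Hypothesis det_neq0 : be * a - al * b != 0.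
Let D := be * a - al * b.

Lemma binary_form_sym_quad m c (P : F -> F -> F) x y :
  (forall u v, P (u * a - v * al) (u * b - v * be) = binary_form m c u v) ->
  D ^+ m * P (x * y) (2 * (x * y) - (x + y) ^+ 2)
  = binary_form m c (sym_quad al be x y) (sym_quad a b x y).
Proof.
move=> Pc; pose u := sym_quad al be x y / D; pose v := sym_quad a b x y / D.
have -> : 2 * (x * y) - (x + y) ^+ 2 = u * b - v * be.
  by rewrite /u /v /sym_quad /D; field.
have -> : x * y = u * a - v * al by rewrite /u /v /sym_quad /D; field.
by rewrite Pc -binary_formZ /u /v ![D * _]mulrC !divfK.
Qed.

Lemma Psi_coefs_exist n :
  exists2 c, is_Psi_coefs a b al be n c &
    forall t, \sum_(r < n./2.+1) c r * t ^+ r = Psi (a - al * t) (b - be * t) n.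
Proof.
have [c Psi_c] := Psi_binary_form a b al be n.
exists c => [x y s_neq0 | t].
  rewrite -(Psi_power_sum x y n) /delta [_ * Psi _ _ _]mulrC mulfK //.
  exact: (binary_form_sym_quad (P := fun a' b' => Psi a' b' n)).
by rewrite -binary_form1l -Psi_c !mul1r ![t * _]mulrC.
Qed.

Lemma Phi_coefs_exist n :
  exists2 c, is_Phi_coefs a b al be n.+1 c &
    forall t, \sum_(r < n./2.+1) c r * t ^+ r = Phi (a - al * t) (b - be * t) n.+1.
Proof.
have [c Phi_c] := Phi_binary_form a b al be n.
exists c => [x y s_neq0 | t].
  rewrite -(Phi_power_diff x y n) /delta /= [_ * Phi _ _ _]mulrC mulfK //.
  exact: (binary_form_sym_quad (P := fun a' b' => Phi a' b' n.+1)).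
by rewrite -binary_form1l -Phi_c !mul1r ![t * _]mulrC.
Qed.

End Quadratics.

Lemma poly_eval_eq0 (R : numDomainType) (p : {poly R}) : (forall t, p.[t] = 0) -> p = 0.
Proof.
move=> p0; apply: (@roots_geq_poly_eq0 _ p [seq i%:R | i <- iota 0 (size p)]).
- by apply/allP => t _; rewrite /root p0.
- by rewrite map_inj_uniq ?iota_uniq // => i j /eqP; rewrite eqr_nat => /eqP.
- by rewrite size_map size_iota.
Qed.

Section Uniqueness.
Variable C : numClosedFieldType.

Lemma exists_sum_sqr_prod (p q : C) : p + 2 * q != 0 -> p - 2 * q != 0 ->
  exists x y, [/\ x + y != 0, x - y != 0, x ^+ 2 + y ^+ 2 = p & x * y = q].
Proof.
move=> s_neq0 d_neq0; pose s := sqrtC (p + 2 * q); pose d := sqrtC (p - 2 * q).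
have [sK dK] : s ^+ 2 = p + 2 * q /\ d ^+ 2 = p - 2 * q by rewrite !sqrtCK.
exists ((s + d) / 2), ((s - d) / 2); split.
- have -> : (s + d) / 2 + (s - d) / 2 = s by field.
  by rewrite sqrtC_eq0.
- have -> : (s + d) / 2 - (s - d) / 2 = d by field.
  by rewrite sqrtC_eq0.
- have -> : ((s + d) / 2) ^+ 2 + ((s - d) / 2) ^+ 2 = (s ^+ 2 + d ^+ 2) / 2 by field.
  by rewrite sK dK; field.
- have -> : (s + d) / 2 * ((s - d) / 2) = (s ^+ 2 - d ^+ 2) / 4 by field.
  by rewrite sK dK; field.
Qed.

Variables a b al be : C.
Hypothesis det_neq0 : be * a - al * b != 0.
Let D := be * a - al * b.

Lemma sym_quad_binary_form_eq0 m e :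
  (forall x y, x + y != 0 -> x - y != 0 ->
     binary_form m e (sym_quad al be x y) (sym_quad a b x y) = 0) ->
  forall r, (r < m.+1)%N -> e r = 0.
Proof.
move=> e0 r lt_r_m; pose q := \poly_(i < m.+1) e i.
(* For (Q1, Q2) = (D, t D), (g (-1)).[t] = (x + y)^2 and (g 1).[t] = - (x - y)^2. *)
pose g k := (2 * a + k * b)%:P - (2 * al + k * be) *: 'X.
have gE k t : (g k).[t] = 2 * a + k * b - (2 * al + k * be) * t by rewrite !hornerE.
have g_neq0 k : k != 0 -> g k != 0.
  move=> k_neq0; apply: contraNneq (mulf_neq0 k_neq0 det_neq0) => g0.
  have -> : k * D = a * ((g k).[0] - (g k).[1]) - al * (g k).[0].
    by rewrite !gE /D; ring.
  by rewrite g0 !horner0 subr0 !mulr0 subr0.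
have q_root t : (g (-1)).[t] != 0 -> (g 1).[t] != 0 -> q.[t] = 0.
  rewrite !gE => g1t g2t.
  have sum_neq0 : (be * t - b) + 2 * (a - al * t) != 0.
    by rewrite (_ : _ + _ = 2 * a + -1 * b - (2 * al + -1 * be) * t) //; ring.
  have diff_neq0 : (be * t - b) - 2 * (a - al * t) != 0.
    by rewrite (_ : _ - _ = - (2 * a + 1 * b - (2 * al + 1 * be) * t)) ?oppr_eq0 //; ring.
  have [x [y [s_neq0 d_neq0 sqr_xy prod_xy]]] := exists_sum_sqr_prod sum_neq0 diff_neq0.
  have := e0 x y s_neq0 d_neq0.
  have -> : sym_quad al be x y = D * 1 by rewrite sym_quadE sqr_xy prod_xy /D; ring.
  have -> : sym_quad a b x y = D * t by rewrite sym_quadE sqr_xy prod_xy /D; ring.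
  rewrite binary_formZ binary_form1l -horner_poly => /eqP.
  by rewrite mulf_eq0 expf_eq0 (negbTE det_neq0) andbF => /eqP.
have g1_neq0 : g (-1) != 0 by apply: g_neq0; rewrite oppr_eq0 oner_eq0.
have g2_neq0 : g 1 != 0 by apply: g_neq0; rewrite oner_eq0.
have /eqP : q * g (-1) * g 1 = 0.
  apply: poly_eval_eq0 => t; rewrite !hornerM.
  have [->|g1t] := eqVneq (g (-1)).[t] 0; first by rewrite mulr0 mul0r.
  have [->|g2t] := eqVneq (g 1).[t] 0; first by rewrite mulr0.
  by rewrite q_root // !mul0r.
rewrite !mulf_eq0 (negbTE g1_neq0) (negbTE g2_neq0) !orbF => /eqP q0.
by have := congr1 (fun p : {poly C} => p`_r) q0; rewrite coef_poly lt_r_m coef0.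
Qed.

Lemma Psi_coefs_uniq n c c' :
  is_Psi_coefs a b al be n c -> is_Psi_coefs a b al be n c' ->
  forall r, (r < n./2.+1)%N -> c r = c' r.
Proof.
move=> cP c'P r lt_r; apply/eqP; rewrite -subr_eq0; apply/eqP.
apply: (sym_quad_binary_form_eq0 (e := fun r => c r - c' r)) lt_r => x y s_neq0 _.
have s_pow_neq0 : (x + y) ^+ delta n != 0 by rewrite expf_neq0.
by rewrite -binary_formB /binary_form /sym_quad -cP // -c'P // subrr.
Qed.

Lemma Phi_coefs_uniq n c c' :
  is_Phi_coefs a b al be n c -> is_Phi_coefs a b al be n c' ->
  forall r, (r < (n.-1)./2.+1)%N -> c r = c' r.
Proof.
move=> cP c'P r lt_r; apply/eqP; rewrite -subr_eq0; apply/eqP.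
apply: (sym_quad_binary_form_eq0 (e := fun r => c r - c' r)) lt_r => x y s_neq0 d_neq0.
have sd_neq0 : (x - y) * (x + y) ^+ delta n.-1 != 0 by rewrite mulf_neq0 ?expf_neq0.
by rewrite -binary_formB /binary_form /sym_quad -cP // -c'P // subrr.
Qed.

End Uniqueness.

Theorem theorem10p1 (R : realType) (a b al be th : R[i]) (n : nat) :
  be * a - al * b != 0 -> (1 <= n)%N ->
  ((exists c : nat -> R[i], is_Psi_coefs a b al be n c) /\
   (forall c : nat -> R[i], is_Psi_coefs a b al be n c ->
      \sum_(r < n./2.+1) c r * th ^+ r = Psi (a - al * th) (b - be * th) n)) /\
  ((exists c : nat -> R[i], is_Phi_coefs a b al be n c) /\
   (forall c : nat -> R[i], is_Phi_coefs a b al be n c ->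
      \sum_(r < (n.-1)./2.+1) c r * th ^+ r = Phi (a - al * th) (b - be * th) n)).
Proof.
move=> det_neq0; case: n => // n _; split.
  have [c cP c_eval] := Psi_coefs_exist det_neq0 n.+1.
  split=> [|c' c'P]; first by exists c.
  rewrite -c_eval; apply: eq_bigr => r _.
  by rewrite (Psi_coefs_uniq det_neq0 c'P cP).
have [c cP c_eval] := Phi_coefs_exist det_neq0 n.
split=> [|c' c'P]; first by exists c.
rewrite -c_eval; apply: eq_bigr => r _.
by rewrite (Phi_coefs_uniq det_neq0 c'P cP).
Qed.
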